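(* Let $a,b$ be integers with $0<b<a$, let $S=\langle a,a+1,\ldots,a+b\rangle$ with conductor $c$, and let $m\ge 2c-1$. If $M$ is an $(S,m,r)$-amenable set, then $M+1=\{x+1\mid x\in M\}$ is an $(S,m+1,r)$-amenable set.
   Context: For $x\in S$, $\mathrm D(x)=\{\alpha\in S\mid x-\alpha\in S\}$. The conductor $c$ is the least element of $S$ with $c+n\in S$ for all $n\in\mathbb N$. For $m\ge 2c-1$, a set $M=\{m_1<\cdots<m_r\}\subseteq S$ with $m=m_1$ is $(S,m,r)$-amenable if $\mathrm D(m_i)\cap[m,\infty)\subseteq M$ for all $i$. *)

From mathcomp Require Import all_boot.
Set Implicit Arguments. Unset Strict Implicit. Unset Printing Implicit Defensive.

Inductive gen_monoid (G : nat -> Prop) : nat -> Prop :=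
  | gm0 : gen_monoid G 0
  | gmS : forall x g, gen_monoid G x -> G g -> gen_monoid G (x + g).

Definition interval_semigroup (a b : nat) : nat -> Prop :=
  gen_monoid (fun g => a <= g <= a + b).

Definition is_conductor (S : nat -> Prop) (c : nat) : Prop :=
  [/\ S c, (forall n, S (c + n)) &
      (forall c', S c' -> (forall n, S (c' + n)) -> c <= c')].

(* alpha \in D(x) : alpha \in S and x - alpha \in S (difference taken in Z,
   so alpha <= x is required). *)
Definition inD (S : nat -> Prop) (x alpha : nat) : Prop :=
  [/\ S alpha, alpha <= x & S (x - alpha)].

Definition amenable (S : nat -> Prop) (m r : nat) (M : seq nat) : Prop :=
  [/\ sorted ltn M, size M = r, 0 < r /\ head 0 M = m,
      (forall x, x \in M -> S x) &
      (forall x alpha, x \in M -> inD S x alpha -> m <= alpha -> alpha \in M)].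

From mathcomp Require Import all_boot.

(* Since 1 is not in S, c >= 1 and hence m >= 2c - 1 >= c.  Everything from the
   conductor on lies in S, so shifting M by one keeps every element in S, and a
   divisor [alpha] of [x + 1] with [alpha > m] comes from the divisor [alpha - 1]
   of [x], which lies in M by amenability. *)

Lemma interval_semigroup_0_or_ge (a b x : nat) :
  interval_semigroup a b x -> x = 0 \/ a <= x.
Proof.
elim=> [|y g _ _ /andP[ag _]]; first by left.
by right; apply: leq_trans ag (leq_addl _ _).
Qed.

Lemma interval_semigroup_1 (a b : nat) : 1 < a -> ~ interval_semigroup a b 1.
Proof. by move=> a_gt1 /interval_semigroup_0_or_ge[|/(leq_trans a_gt1)]. Qed.

Lemma conductor_gt0 (S : nat -> Prop) (c : nat) :
  ~ S 1 -> is_conductor S c -> 0 < c.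
Proof. by case: c => // notS1 [_ S_above _]; case: notS1; apply: S_above. Qed.

Lemma conductor_leP (S : nat -> Prop) (c y : nat) :
  is_conductor S c -> c <= y -> S y.
Proof. by move=> [_ S_above _] cy; rewrite -(subnKC cy). Qed.

Lemma sorted_ltn_head_le (s : seq nat) (x : nat) :
  sorted ltn s -> x \in s -> head 0 s <= x.
Proof.
case: s => [//|y s] /= /(order_path_min ltn_trans)/allP ys.
by rewrite in_cons => /predU1P[-> //|/ys/ltnW].
Qed.

Lemma amenable_shift (S : nat -> Prop) (m r : nat) (M : seq nat) :
  (forall y, m <= y -> S y) ->
  amenable S m r M -> amenable S m.+1 r (map succn M).
Proof.
move=> S_above [sortM sizeM [r_gt0 headM] _ closedM].
have m_le x : x \in M -> m <= x by rewrite -headM; apply: sorted_ltn_head_le.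
split.
- by rewrite sorted_map.
- by rewrite size_map.
- split=> //; rewrite -headM.
  by case: M sizeM {headM sortM closedM m_le} r_gt0 => [<-|].
- by move=> _ /mapP[x xM ->]; apply/S_above/(leq_trans (m_le x xM)).
- move=> _ alpha /mapP[x xM ->] [_ alpha_le_x1 S_diff] m_lt_alpha.
  have alphaE : alpha = alpha.-1.+1 by rewrite prednK // (leq_trans _ m_lt_alpha).
  have m_le_alpha1 : m <= alpha.-1 by rewrite -ltnS -alphaE.
  rewrite alphaE map_f // (closedM x) //.
  split; first exact: S_above.
  + by rewrite -ltnS -alphaE.
  + by rewrite -subSS -alphaE.
Qed.

Theorem lemma4p20 (a b : nat) (hb : 0 < b) (hba : b < a) (c m r : nat)
  (M : seq nat) :
  is_conductor (interval_semigroup a b) c ->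
  2 * c - 1 <= m ->
  amenable (interval_semigroup a b) m r M ->
  amenable (interval_semigroup a b) m.+1 r (map succn M).
Proof.
move=> condc hm; apply: amenable_shift => y my.
have c_gt0 : 0 < c.
  by apply: conductor_gt0 condc; apply: interval_semigroup_1; apply: leq_trans hba.
apply: conductor_leP condc _; apply: leq_trans my; apply: leq_trans hm.
by rewrite mul2n -addnn -addnBA // leq_addr.
Qed.
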